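(* Let $G$ be an interval graph and $D_s\neq D_t$ dominating multisets of $G$ with $|D_s|=|D_t|$. Then there exists a minimum-cost matching $M'$ between $D_s$ and $D_t$ such that at least one of the following holds: (i) there are $(u,v)\in M'$ and $u'\in\mathrm{succ}(u,v)$ such that $\mathrm{slide}(D_s,u,u')$ is dominating; (ii) there are $(u,v)\in M'$ and $v'\in\mathrm{succ}(v,u)$ such that $\mathrm{slide}(D_t,v,v')$ is dominating.
   Context: A multiset $H$ of vertices is a function $H:V\to\mathbb{N}\cup\{0\}$; it is dominating if its support $\{v:H(v)\ge1\}$ is a dominating set. $\mathrm{slide}(D,u,w)=(D\setminus\{u\})\cup\{w\}$. $\mathrm{succ}(u,w)$ is the set of vertices following $u$ on some shortest path from $u$ to $w$, with $\mathrm{succ}(u,u)=\emptyset$. A matching between equal-size multisets $D_s,D_t$ is a multiset $M$ on $V\times V$ with exactly $D_s(v)$ pairs $(v,\cdot)$ and $D_t(v)$ pairs $(\cdot,v)$ for each $v$; cost $c(M)=\sum_{(x,y)}d_G(x,y)M(x,y)$; a minimum-cost matching minimizes this cost. (The graph is assumed connected so that costs are finite.) *)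

From mathcomp Require Import all_boot all_order all_algebra.
Set Implicit Arguments. Unset Strict Implicit. Unset Printing Implicit Defensive.
Import Order.TTheory GRing.Theory Num.Theory.

(* A simple graph on a finite vertex type T is a symmetric irreflexive
   relation e : rel T. *)

Definition interval_graph (T : finType) (e : rel T) : Prop :=
  exists I : T -> rat * rat,
    (forall x, ((I x).1 <= (I x).2)%R) /\
    (forall x y, x != y ->
       e x y = (((I x).1 <= (I y).2)%R && ((I y).1 <= (I x).2)%R)).

Definition connected_graph (T : finType) (e : rel T) : Prop :=
  forall x y, connect e x y.

Fixpoint walk (T : finType) (e : rel T) (k : nat) (x y : T) : bool :=
  match k with
  | 0 => x == y
  | k'.+1 => [exists z, e x z && walk e k' z y]
  end.

(* Shortest-path distance d_G(x,y): least k with a walk of length k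
   (searched in 0 .. #|T|-1, which suffices for connected graphs). *)
Definition dist (T : finType) (e : rel T) (x y : T) : nat :=
  find (fun k => walk e k x y) (iota 0 #|T|).

Definition succ (T : finType) (e : rel T) (u w z : T) : Prop :=
  exists p : seq T, [&& path e u (z :: p), last z p == w &
                       (size p).+1 == dist e u w].

Definition mset (T : finType) := T -> nat.

Definition msize (T : finType) (H : mset T) : nat := (\sum_(v : T) H v)%N.

Definition dominating (T : finType) (e : rel T) (H : mset T) : Prop :=
  forall v : T, exists u : T, (1 <= H u)%N /\ (u = v \/ e u v).

Definition slide (T : finType) (D : mset T) (u w : T) : mset T :=
  fun x => (D x - (x == u) + (x == w))%N.

(* A matching between Ds and Dt: a multiset of pairs M *)
Definition is_matching (T : finType) (Ds Dt : mset T) (M : T -> T -> nat) : Prop :=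
  (forall v, (\sum_(y : T) M v y)%N = Ds v) /\
  (forall v, (\sum_(x : T) M x v)%N = Dt v).

Definition mcost (T : finType) (e : rel T) (M : T -> T -> nat) : nat :=
  (\sum_(x : T) \sum_(y : T) dist e x y * M x y)%N.

Definition min_cost_matching (T : finType) (e : rel T) (Ds Dt : mset T)
    (M : T -> T -> nat) : Prop :=
  is_matching Ds Dt M /\
  forall M', is_matching Ds Dt M' -> (mcost e M <= mcost e M')%N.

From mathcomp Require Import all_boot all_order all_algebra.
From mathcomp Require Import lra zify.
From Stdlib Require Import Classical FunctionalExtensionality Wf_nat.
Set Implicit Arguments. Unset Strict Implicit. Unset Printing Implicit Defensive.
Import Order.TTheory GRing.Theory Num.Theory.

(* Let s be a vertex at which Ds and Dt differ whose interval ends leftmost;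
   by symmetry s has more copies in Ds. Among the minimum-cost matchings that
   keep min (Ds v) (Dt v) copies of every v in place, choose one together with
   a partner t != s of s minimizing (d(s,t), r t) lexicographically. If Ds has
   several copies of s, or Dt of t, sliding one keeps domination. Else slide s to
   t (or t to s) when s and t are adjacent, and else to the neighbour g of s
   whose interval reaches furthest right, which lies on a shortest s-t path.
   If this destroys domination, a vertex privately dominated by s is dominated
   in Dt by a deficit neighbour w of s that precedes t in the above order;
   re-matching s to w, directly or by exchanging partners with the copy
   matched to w, does not increase the cost because distances in an interval
   graph are monotone in the right endpoints, contradicting the choice of t. *)

Lemma ex_minimal (P : nat -> Prop) :
  (exists n, P n) -> exists n, P n /\ forall m, P m -> (n <= m)%N.
Proof.
move=> exP; have [n [[Pn n_min] _]] :=
  dec_inh_nat_subset_has_unique_least_element P (fun n => classic (P n)) exP.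
by exists n; split=> // m /n_min /ssrnat.leP.
Qed.

Section Distance.
Variables (T : finType) (e : rel T).
Hypothesis e_sym : symmetric e.
Hypothesis e_conn : connected_graph e.
Local Notation d := (dist e).

Lemma walkP k x y :
  walk e k x y <-> exists p, [/\ path e x p, last x p = y & size p = k].
Proof.
elim: k x => [|k IH] x /=.
  split; first by move/eqP=> ->; exists [::].
  by case=> [[|z p]] [] //= _ -> _.
split.
  case/existsP=> z /andP[exz] /IH [p [pp lp sp]].
  by exists (z :: p); rewrite /= exz pp lp sp.
case=> [[|z p]] [] //= /andP[exz pp] lp [sp].
by apply/existsP; exists z; rewrite exz /=; apply/IH; exists p.
Qed.

(* A shortest walk from x to y is a path without repetition, hence has fewer
   than #|T| edges: this is why [dist] may search [iota 0 #|T|] only. *)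
Lemma has_walk_below_card x y : has (fun k => walk e k x y) (iota 0 #|T|).
Proof.
have [p pp ->] := connectP (e_conn x y).
case: (shortenP pp) => p' pp' up' _.
apply/hasP; exists (size p'); last by apply/walkP; exists p'.
rewrite mem_iota add0n /= -ltnS -[(size p').+1]/(size (x :: p')).
by rewrite -(card_uniqP up') ltnS max_card.
Qed.

Lemma walk_dist x y : walk e (d x y) x y.
Proof.
have hw := has_walk_below_card x y; have := nth_find 0 hw.
by move: hw; rewrite has_find size_iota => /(nth_iota 0) ->.
Qed.

Lemma dist_min_walk k x y : walk e k x y -> (d x y <= k)%N.
Proof.
move=> hw; rewrite leqNgt; apply/negP => hk.
have hd : (d x y < #|T|)%N.
  by have := has_walk_below_card x y; rewrite has_find size_iota.
by have := before_find 0 hk; rewrite nth_iota ?add0n ?hw //; apply: ltn_trans hd.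
Qed.

Lemma dist_le_path x p : path e x p -> (d x (last x p) <= size p)%N.
Proof. by move=> pp; apply: dist_min_walk; apply/walkP; exists p. Qed.

Lemma shortest_path_ex x y :
  exists p, [/\ path e x p, last x p = y & size p = d x y].
Proof. exact/walkP/walk_dist. Qed.

Lemma dist_triangle x y z : (d x z <= d x y + d y z)%N.
Proof.
have [p [pp lp <-]] := shortest_path_ex x y.
have [q [pq lq <-]] := shortest_path_ex y z.
have := @dist_le_path x (p ++ q).
by rewrite cat_path pp lp pq last_cat lp lq size_cat; apply.
Qed.

Lemma distC x y : d x y = d y x.
Proof.
suff le_d a b : (d a b <= d b a)%N by apply/eqP; rewrite eqn_leq !le_d.
have [p [pp lp <-]] := shortest_path_ex b a.
have rp : path e (last b p) (rev (belast b p)).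
  by rewrite rev_path; apply: sub_path pp => u v; rewrite e_sym.
have := dist_le_path rp; rewrite lp size_rev size_belast.
suff -> : last a (rev (belast b p)) = b by [].
by rewrite -lp; case: (p) => [|z q] //=; rewrite rev_cons last_rcons.
Qed.

Lemma distxx x : d x x = 0%N.
Proof. by apply/eqP; rewrite -leqn0; apply: dist_min_walk => /=. Qed.

Lemma dist_gt0 x y : x != y -> (0 < d x y)%N.
Proof.
apply: contraNT; rewrite -leqNgt leqn0 => /eqP d0.
by have := walk_dist x y; rewrite d0.
Qed.

Lemma dist_edge x y : e x y -> (d x y <= 1)%N.
Proof. by move=> exy; apply: dist_min_walk; apply/existsP; exists y; rewrite exy /=. Qed.

Lemma dist1_edge x y : d x y = 1%N -> e x y.
Proof. by move=> d1; have := walk_dist x y; rewrite d1 => /existsP[z /andP[+ /eqP <-]]. Qed.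

Lemma succ_intro x y z :
  e x z -> d z y = (d x y).-1 -> (0 < d x y)%N -> succ e x y z.
Proof.
move=> exz dz d_gt0; have [p [pp lp sp]] := shortest_path_ex z y.
by exists p; rewrite /= exz pp lp eqxx sp dz prednK //=. Qed.

Lemma succ_edge x y z : succ e x y z -> e x z.
Proof. by case=> p /and3P[/andP[]]. Qed.

Lemma succ_exists x y : x != y -> exists z, succ e x y z.
Proof.
move=> xy; have [[|z p] [pp lp sp]] := shortest_path_ex x y.
  by move: xy; rewrite -lp /= eqxx.
by exists z, p; rewrite pp -sp -lp !eqxx.
Qed.

End Distance.

Definition dominates (T : finType) (e : rel T) (u x : T) := (u == x) || e u x.

Section Domination.
Variables (T : finType) (e : rel T).
Hypothesis e_conn : connected_graph e.
Local Notation d := (dist e).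

Lemma dominatingP (D : mset T) :
  dominating e D <-> forall v, exists2 u, (0 < D u)%N & dominates e u v.
Proof.
split=> hD v.
  have [u [u_gt0 uv]] := hD v; exists u => //.
  by rewrite /dominates; case: uv => [->|->]; rewrite ?eqxx ?orbT.
have [u u_gt0 /orP uv] := hD v; exists u; split=> //.
by case: uv => [/eqP|]; [left|right].
Qed.

Lemma dist_dominates u x : dominates e u x -> (d u x <= 1)%N.
Proof. by case/orP=> [/eqP->|/(dist_edge e_conn)//]; rewrite distxx. Qed.

Lemma dist_gt1 u x : ~~ dominates e u x -> (1 < d u x)%N.
Proof.
rewrite negb_or => /andP[ux /negP nexu].
rewrite ltn_neqAle dist_gt0 // andbT eq_sym.
by apply/eqP => /(dist1_edge e_conn).
Qed.

Lemma dominating_slide_surplus (D : mset T) a b :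
  dominating e D -> (2 <= D a)%N -> dominating e (slide D a b).
Proof.
move=> /dominatingP hD Da2; apply/dominatingP => v; have [u Du uv] := hD v.
by exists u => //; rewrite /slide; case: eqVneq => [->|]; lia.
Qed.

Lemma private_of_not_dominating_slide (D : mset T) a b :
  dominating e D -> D a = 1%N -> a != b -> ~ dominating e (slide D a b) ->
  exists x, [/\ dominates e a x, ~~ dominates e b x &
    forall u, u != a -> (0 < D u)%N -> ~~ dominates e u x].
Proof.
move=> /dominatingP hD Da1 ab not_dom.
have [x no_dom] : exists x, forall u, (0 < slide D a b u)%N -> ~~ dominates e u x.
  apply: NNPP => none; apply/not_dom/dominatingP => v; apply: NNPP => nv.
  by apply: none; exists v => w hw; apply/negP => wv; apply: nv; exists w.
have slide_pos u : u != a -> (0 < D u)%N -> (0 < slide D a b u)%N.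
  by move=> /negbTE ua Du; rewrite /slide ua; lia.
exists x; split.
- have [u Du ux] := hD x; case: (eqVneq u a) => [<- //|ua].
  by have := no_dom u (slide_pos u ua Du); rewrite ux.
- by apply: no_dom; rewrite /slide eqxx eq_sym (negbTE ab); lia.
- by move=> u ua Du; apply/no_dom/slide_pos.
Qed.

End Domination.

Section IntervalGraph.
Variables (T : finType) (e : rel T).
Hypothesis e_sym : symmetric e.
Hypothesis e_conn : connected_graph e.
Variables (l r : T -> rat).
Hypothesis lr : forall x, (l x <= r x)%R.
Hypothesis e_lr : forall x y, x != y -> e x y = (l x <= r y)%R && (l y <= r x)%R.
Local Notation d := (dist e).

Lemma dominates_interval u x : dominates e u x = (l u <= r x)%R && (l x <= r u)%R.
Proof. by rewrite /dominates; case: eqVneq => [->|/e_lr //]; rewrite !lr. Qed.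

Lemma edge_interval u x : e u x -> (l u <= r x)%R && (l x <= r u)%R.
Proof. by rewrite -dominates_interval /dominates => ->; rewrite orbT. Qed.

(* The interval of [w] contains the point [r s]. *)
Lemma straddle_dominates s w x :
  dominates e w x -> (r x <= r s)%R -> (r s <= r w)%R -> dominates e s w.
Proof.
rewrite !dominates_interval => /andP[? ?] ? ?; have := lr s => ?.
by apply/andP; split; lra.
Qed.

Lemma dist_right_mono a b c :
  (r b <= r a)%R -> (r a < l c)%R -> (d a c <= d b c)%N.
Proof.
have [p [+ + <-]] := shortest_path_ex e_conn b c.
elim: p b => [|y p IH] b /=; first by move=> _ <- ba; have := lr b; lra.
case/andP=> /edge_interval/andP[_ lyb] pp lp ba ac.
have [ya|ay] := lerP (r y) (r a); first exact: leq_trans (IH y pp lp ya ac) _.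
have ya : dominates e y a.
  by rewrite dominates_interval; have := lr a => ?; apply/andP; split; lra.
apply: leq_trans (dist_triangle e_conn a y c) _; rewrite -add1n leq_add //.
  by rewrite distC //; apply: dist_dominates.
by rewrite -lp; apply: dist_le_path.
Qed.

Lemma rightmost_neighbor_succ s t g :
  (r s < l t)%R -> e s g -> (forall y, e s y -> (r y <= r g)%R) -> succ e s t g.
Proof.
move=> st sg g_max; have /andP[_ lgs] := edge_interval sg.
have st2 : (1 < d s t)%N.
  by apply: (dist_gt1 e_conn); rewrite dominates_interval negb_and -!ltNge st orbT.
apply: succ_intro => //; last exact: ltnW.
apply/eqP; rewrite eqn_leq; apply/andP; split; last first.
  have := dist_triangle e_conn s g t; have := dist_edge e_conn sg; lia.
have [[|p1 p] [/= pp lp sp]] := shortest_path_ex e_conn s t.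
  by move: st2; rewrite -sp.
case/andP: pp => sp1 pp.
have [tg|gt] := lerP (l t) (r g).
  have : dominates e g t by rewrite dominates_interval tg andbT; have := lr t => ?; lra.
  by move/(dist_dominates e_conn); move: st2; lia.
have := dist_right_mono (g_max _ sp1) gt; have := dist_le_path e_conn pp.
by rewrite lp -sp /=; lia.
Qed.

Definition rank (x : T) := #|[pred z | (r z < r x)%R]|.

Lemma rank_lt a b : (r a < r b)%R -> (rank a < rank b)%N.
Proof.
move=> ab; apply/proper_card/properP; split.
  by apply/subsetP => z; rewrite !inE => za; lra.
by exists a; rewrite !inE // ltxx.
Qed.

Lemma rank_lt_card x : (rank x < #|T|)%N.
Proof. by apply/proper_card/properP; split; [apply/subsetP | exists x; rewrite !inE ?ltxx]. Qed.

Lemma exchange_cost_bound s t w z :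
  s != t -> z != w -> (r s <= r z)%R -> (r w <= r t)%R \/ (d w t < d s t)%N ->
  (d z t + 1 <= d s t + d z w)%N.
Proof.
move=> st zw sz wt; have st1 := dist_gt0 e_conn st; have zw1 := dist_gt0 e_conn zw.
case: wt => [wt|wst]; last by have := dist_triangle e_conn z w t; lia.
case zt: (dominates e z t); first by have := dist_dominates e_conn zt; lia.
move: zt; rewrite dominates_interval => /negbT; rewrite negb_and -!ltNge.
case/orP=> [tz|zt].
  by have := dist_right_mono wt tz; rewrite !(distC e_sym e_conn _ z); lia.
by have := dist_right_mono sz zt; lia.
Qed.

End IntervalGraph.

Section Matchings.
Variables (T : finType) (e : rel T).
Hypothesis e_conn : connected_graph e.
Local Notation d := (dist e).
Implicit Types (Ds Dt D : mset T) (M : T -> T -> nat).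

Lemma sum_mul_eq (F : T -> nat) b : (\sum_y F y * (y == b) = F b)%N.
Proof. by rewrite (bigD1 b) //= eqxx muln1 big1 ?addn0 // => y /negbTE ->; rewrite muln0. Qed.

Lemma sum_eq1 (b : T) : (\sum_y (y == b) = 1)%N.
Proof. by rewrite -[RHS](sum_mul_eq (fun=> 1%N) b); apply: eq_bigr => y; rewrite mul1n. Qed.

Lemma pair_eqn (x y a b : T) : ((x, y) == (a, b) = (x == a) * (y == b) :> nat)%N.
Proof. by rewrite xpair_eqE; case: (x == a); case: (y == b). Qed.

Lemma sum_pair_eql (x a b : T) : (\sum_y ((x, y) == (a, b)) = (x == a))%N.
Proof. by under eq_bigr do rewrite pair_eqn; apply: (sum_mul_eq (fun=> _)). Qed.

Lemma sum_pair_eqr (y a b : T) : (\sum_x ((x, y) == (a, b)) = (y == b))%N.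
Proof. by under eq_bigr do rewrite pair_eqn mulnC; apply: (sum_mul_eq (fun=> _)). Qed.

Lemma sum2_mul_pair_eq (F : T -> T -> nat) a b :
  (\sum_x \sum_y F x y * ((x, y) == (a, b)) = F a b)%N.
Proof.
under eq_bigr do under eq_bigr do rewrite pair_eqn mulnA.
by under eq_bigr do rewrite sum_mul_eq; rewrite sum_mul_eq.
Qed.

Lemma sum_gt0_ex (P : pred T) (F : T -> nat) :
  (0 < \sum_(y | P y) F y)%N -> exists y, P y /\ (0 < F y)%N.
Proof.
move=> pos; apply: NNPP => none; move: pos; rewrite big1 // => y Py.
by apply/eqP; rewrite -leqn0 leqNgt; apply/negP => Fy; apply: none; exists y.
Qed.

Lemma msize_gt0 D : (0 < msize D)%N -> exists a, (0 < D a)%N.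
Proof. by case/sum_gt0_ex=> a [_ Da]; exists a. Qed.

Lemma msize_remove D a : (0 < D a)%N -> msize D = (msize (fun v => D v - (v == a)) + 1)%N.
Proof.
move=> Da; rewrite /msize -(sum_eq1 a) -big_split /=; apply: eq_bigr => v _.
by case: eqP => [->|]; lia.
Qed.

Lemma matching_exists Ds Dt : msize Ds = msize Dt -> exists M, is_matching Ds Dt M.
Proof.
move: {-1}(msize Ds) (erefl (msize Ds)) => n; elim: n Ds Dt => [|n IH] Ds Dt.
  rewrite /msize => /eqP + /esym/eqP; rewrite !sum_nat_eq0 => /forallP Ds0 /forallP Dt0.
  by exists (fun _ _ => 0%N); split=> v; rewrite big1 // (eqP (Ds0 v), eqP (Dt0 v)).
move=> szs szt; have [a Da] : exists a, (0 < Ds a)%N by apply: msize_gt0; rewrite szs.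
have [b Db] : exists b, (0 < Dt b)%N by apply: msize_gt0; rewrite -szt.
have [||M [Mr Mc]] := IH (fun v => Ds v - (v == a))%N (fun v => Dt v - (v == b))%N.
- by move: szs; rewrite (msize_remove Da) addn1 => -[].
- by move: szt; rewrite (msize_remove Db) addn1 => -[].
exists (fun x y => M x y + ((x, y) == (a, b)))%N; split=> v; rewrite big_split /=.
  by rewrite Mr sum_pair_eql; move: Da; case: eqP => [->|]; lia.
by rewrite Mc sum_pair_eqr; move: Db; case: eqP => [->|]; lia.
Qed.

Lemma sum2_mul_eql (N : T -> T -> nat) v :
  (\sum_x \sum_y (x == v) * N x y = \sum_y N v y)%N.
Proof.
under eq_bigr do rewrite -big_distrr /= mulnC.
exact: (sum_mul_eq (fun x => \sum_y N x y)%N).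
Qed.

Lemma sum2_mul_eqr (N : T -> T -> nat) v :
  (\sum_x \sum_y (y == v) * N x y = \sum_x N x v)%N.
Proof.
under eq_bigr do under eq_bigr do rewrite mulnC.
by apply: eq_bigr => x _; apply: sum_mul_eq.
Qed.

(* Meant for positive [M a b] and [M a' b']: trade one copy of the pairs
   (a, b), (a', b') for (a, b'), (a', b). *)
Definition exchange M a b a' b' : T -> T -> nat := fun x y =>
  (M x y + ((x, y) == (a, b')) + ((x, y) == (a', b))
     - ((x, y) == (a, b)) - ((x, y) == (a', b')))%N.

Section Exchange.
Variables (M : T -> T -> nat) (a b a' b' : T).
Hypotheses (Mab : (0 < M a b)%N) (Mab' : (0 < M a' b')%N) (ab_neq : (a, b) != (a', b')).

Lemma exchangeE x y :
  (exchange M a b a' b' x y + ((x, y) == (a, b)) + ((x, y) == (a', b')) =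
   M x y + ((x, y) == (a, b')) + ((x, y) == (a', b)))%N.
Proof.
have : (((x, y) == (a, b)) + ((x, y) == (a', b')) <= M x y)%N.
  case: ((x, y) =P (a, b)) => [E|_]; case: ((x, y) =P (a', b')) => [E'|_] //=.
  - by move: ab_neq; rewrite -E -E' eqxx.
  - by case: E => -> ->; rewrite addn0.
  - by case: E' => -> ->.
rewrite /exchange /=; lia.
Qed.

Lemma sum2_exchange (F : T -> T -> nat) :
  (\sum_x \sum_y F x y * exchange M a b a' b' x y + F a b + F a' b' =
   \sum_x \sum_y F x y * M x y + F a b' + F a' b)%N.
Proof.
rewrite -!(sum2_mul_pair_eq F) -!big_split; apply: eq_bigr => x _.
rewrite -!big_split; apply: eq_bigr => y _ /=.
by rewrite -!mulnDr exchangeE.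
Qed.

Lemma exchange_matching Ds Dt : is_matching Ds Dt M -> is_matching Ds Dt (exchange M a b a' b').
Proof.
case=> Mr Mc; split=> v.
  have := sum2_exchange (fun x _ => (x == v)); rewrite !sum2_mul_eql Mr; lia.
have := sum2_exchange (fun _ y => (y == v)); rewrite !sum2_mul_eqr Mc; lia.
Qed.

Lemma mcost_exchange :
  (mcost e (exchange M a b a' b') + d a b + d a' b' = mcost e M + d a b' + d a' b)%N.
Proof. exact: sum2_exchange. Qed.

End Exchange.

Lemma matching_rowE Ds Dt M u :
  is_matching Ds Dt M -> Ds u = (M u u + \sum_(y | y != u) M u y)%N.
Proof. by case=> Mr _; rewrite -Mr (bigD1 u). Qed.

Lemma matching_colE Ds Dt M v :
  is_matching Ds Dt M -> Dt v = (M v v + \sum_(x | x != v) M x v)%N.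
Proof. by case=> _ Mc; rewrite -Mc (bigD1 v). Qed.

Lemma matching_out Ds Dt M u : is_matching Ds Dt M -> (M u u < Ds u)%N ->
  exists y, y != u /\ (0 < M u y)%N.
Proof.
by move=> /(matching_rowE u) ->; rewrite -{1}[M u u]addn0 ltn_add2l => /sum_gt0_ex.
Qed.

Lemma matching_in Ds Dt M v : is_matching Ds Dt M -> (M v v < Dt v)%N ->
  exists x, x != v /\ (0 < M x v)%N.
Proof.
by move=> /(matching_colE v) ->; rewrite -{1}[M v v]addn0 ltn_add2l => /sum_gt0_ex.
Qed.

Definition tight_matching Ds Dt M :=
  min_cost_matching e Ds Dt M /\ forall v, M v v = minn (Ds v) (Dt v).

Lemma tight_off_diag Ds Dt M u v : tight_matching Ds Dt M ->
  (0 < M u v)%N -> u != v -> (Dt u < Ds u)%N /\ (Ds v < Dt v)%N.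
Proof.
move=> [[MDs _] Mdiag] Muv uv.
have := matching_rowE u MDs; rewrite (bigD1 v) 1?eq_sym //=.
have := matching_colE v MDs; rewrite (bigD1 u) //=.
by move: (Mdiag u) (Mdiag v); lia.
Qed.

Lemma tight_exchange Ds Dt M a b a' b' : tight_matching Ds Dt M ->
  (0 < M a b)%N -> (0 < M a' b')%N -> (a, b) != (a', b') ->
  a != b -> a' != b' -> a != b' -> a' != b ->
  (d a b' + d a' b <= d a b + d a' b')%N -> tight_matching Ds Dt (exchange M a b a' b').
Proof.
move=> [[MDs Mmin] Mdiag] Mab Mab' ab_neq ab a'b' ab' a'b le_d; split; first split.
- exact: exchange_matching.
- move=> M' M'Ds; apply: leq_trans (Mmin _ M'Ds).
  by have := mcost_exchange Mab Mab' ab_neq; lia.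
- move=> v; have := exchangeE Mab Mab' ab_neq v v; rewrite !xpair_eqE -Mdiag.
  have offd p q : p != q -> (v == p) && (v == q) = false.
    by move=> pq; apply: contraNF pq => /andP[/eqP <- /eqP <-].
  by rewrite !offd //; lia.
Qed.

Lemma min_cost_matching_exists Ds Dt :
  msize Ds = msize Dt -> exists M, min_cost_matching e Ds Dt M.
Proof.
move=> /matching_exists[M0 M0Ds].
case: (@ex_minimal (fun c => exists M, is_matching Ds Dt M /\ mcost e M = c)).
  by exists (mcost e M0), M0.
move=> _ [[M [MDs <-]] c_min]; exists M; split=> // M' M'Ds.
by apply: c_min; exists M'.
Qed.

(* The triangle inequality d(x, y) <= d(x, v) + d(v, y) lets a minimum-cost
   matching re-route (v, y), (x, v) into (v, v), (x, y). *)
Lemma min_cost_matching_fix Ds Dt M v : min_cost_matching e Ds Dt M ->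
  (M v v < minn (Ds v) (Dt v))%N ->
  exists M', min_cost_matching e Ds Dt M' /\ forall u, (M u u + (u == v) <= M' u u)%N.
Proof.
move=> [MDs Mmin] lt_min.
have [y [yv Mvy]] := matching_out MDs (leq_trans lt_min (geq_minl _ _)).
have [x [xv Mxv]] := matching_in MDs (leq_trans lt_min (geq_minr _ _)).
have ne : (v, y) != (x, v) by rewrite xpair_eqE negb_and yv orbT.
exists (exchange M v y x v); split.
  split=> [|M2 M2Ds]; first exact: exchange_matching.
  apply: leq_trans (Mmin _ M2Ds).
  have := mcost_exchange Mvy Mxv ne; have := dist_triangle e_conn x v y.
  by rewrite (distxx e_conn); lia.
move=> u; have := exchangeE Mvy Mxv ne u u; rewrite !xpair_eqE.
case: (eqVneq u v) => [->|_]; rewrite ?andbF //=; last by lia.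
by rewrite eq_sym (negbTE yv) eq_sym (negbTE xv) /=; lia.
Qed.

Lemma tight_matching_exists Ds Dt :
  msize Ds = msize Dt -> exists M, tight_matching Ds Dt M.
Proof.
move=> /min_cost_matching_exists[M0 M0min].
case: (@ex_minimal (fun k =>
    exists M, min_cost_matching e Ds Dt M /\ (\sum_v (Ds v - M v v))%N = k)).
  by exists (\sum_v (Ds v - M0 v v))%N, M0.
move=> _ [[M [Mmin <-]] k_min]; exists M; split=> // v.
have diag_le M' u : is_matching Ds Dt M' -> (M' u u <= minn (Ds u) (Dt u))%N.
  move=> M'Ds; rewrite leq_min (matching_rowE u M'Ds) (matching_colE u M'Ds).
  by rewrite !leq_addr.
apply/eqP; rewrite eqn_leq (diag_le M v Mmin.1) /= leqNgt; apply/negP.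
case/(min_cost_matching_fix Mmin) => M' [M'min M'diag].
have := k_min _ (ex_intro _ M' (conj M'min erefl)); apply/negP; rewrite -ltnNge.
suff : (\sum_u ((u == v) + (Ds u - M' u u)) <= \sum_u (Ds u - M u u))%N.
  by rewrite big_split /= sum_eq1 add1n.
apply: leq_sum => u _; have := M'diag u.
have := diag_le M' u M'min.1; have := diag_le M u Mmin.1; rewrite !leq_min; lia.
Qed.

End Matchings.

Lemma mcost_transpose (T : finType) (e : rel T) (M : T -> T -> nat) :
  symmetric e -> connected_graph e -> mcost e (fun u v => M v u) = mcost e M.
Proof.
move=> e_sym e_conn; rewrite /mcost exchange_big /=.
by apply: eq_bigr => x _; apply: eq_bigr => y _; rewrite (distC e_sym e_conn).
Qed.

Lemma min_cost_matching_transpose (T : finType) (e : rel T) (Ds Dt : mset T) M :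
  symmetric e -> connected_graph e ->
  min_cost_matching e Dt Ds M -> min_cost_matching e Ds Dt (fun u v => M v u).
Proof.
move=> e_sym e_conn [[Mr Mc] Mmin]; split=> [//|M' [M'r M'c]].
rewrite (mcost_transpose M) // -(mcost_transpose M') //.
by apply: Mmin; split.
Qed.

Definition dominating_slide_along (T : finType) (e : rel T) (Ds Dt : mset T)
    (M : T -> T -> nat) :=
  (exists u v u', (0 < M u v)%N /\ succ e u v u' /\ dominating e (slide Ds u u'))
  \/ (exists u v v', (0 < M u v)%N /\ succ e v u v' /\ dominating e (slide Dt v v')).

Lemma dominating_slide_along_transpose (T : finType) (e : rel T) (Ds Dt : mset T) M :
  dominating_slide_along e Dt Ds M -> dominating_slide_along e Ds Dt (fun u v => M v u).
Proof.
by case=> [[u [v [u' ?]]]|[u [v [v' ?]]]]; [right; exists v, u, u' | left; exists v, u, v'].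
Qed.

Section LeftmostSurplus.
Variables (T : finType) (e : rel T).
Hypothesis e_sym : symmetric e.
Hypothesis e_irr : irreflexive e.
Hypothesis e_conn : connected_graph e.
Variables (l r : T -> rat).
Hypothesis lr : forall x, (l x <= r x)%R.
Hypothesis e_lr : forall x y, x != y -> e x y = (l x <= r y)%R && (l y <= r x)%R.
Local Notation d := (dist e).
Local Notation dominates_interval := (dominates_interval lr e_lr).
Local Notation edge_interval := (edge_interval lr e_lr).

Variables (Ds Dt : mset T) (s : T).
Hypotheses (Ds_dom : dominating e Ds) (Dt_dom : dominating e Dt).
Hypothesis s_surplus : (Dt s < Ds s)%N.
Hypothesis s_leftmost : forall v, Ds v != Dt v -> (r s <= r v)%R.

Lemma deficit_right v : (Ds v < Dt v)%N -> (r s <= r v)%R.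
Proof. by move=> v_def; apply: s_leftmost; rewrite neq_ltn v_def. Qed.

Lemma surplus_right v : (Dt v < Ds v)%N -> (r s <= r v)%R.
Proof. by move=> v_sur; apply: s_leftmost; rewrite neq_ltn v_sur orbT. Qed.

Lemma deficit_dominator x : Dt s = 0%N -> (r x <= r s)%R ->
  (forall u, u != s -> (0 < Ds u)%N -> ~~ dominates e u x) ->
  exists w, [/\ w != s, (Ds w < Dt w)%N, (0 < Dt w)%N, e s w & dominates e w x].
Proof.
move=> Dts xs x_priv; have [w Dtw wx] := (dominatingP e Dt).1 Dt_dom x.
have ws : w != s by apply: contraTneq Dtw => ->; rewrite Dts.
have w_def : (Ds w < Dt w)%N.
  by rewrite ltnNge; apply: contraL wx => Dsw; apply: x_priv => //; apply: leq_trans Dsw.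
exists w; split=> //; have := straddle_dominates lr e_lr wx xs (deficit_right w_def).
by rewrite /dominates eq_sym (negbTE ws).
Qed.

(* Lexicographic in (d s t, r t), encoded as a natural number via [rank]. *)
Definition potential t := (d s t * #|T| + rank r t)%N.

Definition matched_away M t := [/\ tight_matching e Ds Dt M, t != s & (0 < M s t)%N].

Section MinimalPair.
Variables (M : T -> T -> nat) (t : T).
Hypothesis Mt : matched_away M t.
Hypothesis Mt_min : forall M' t', matched_away M' t' -> (potential t <= potential t')%N.

Lemma t_deficit : (Ds t < Dt t)%N.
Proof. by case: Mt => M_tight ts Mst; case: (tight_off_diag M_tight Mst); rewrite // eq_sym. Qed.

(* [s] cannot be re-matched to a closer deficit vertex [w]: either [w] is
   already a partner of [s], or swapping partners with the [Ds]-copy matched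
   to [w] keeps the matching tight. *)
Lemma no_better_partner w : w != s -> w != t -> (Ds w < Dt w)%N -> e s w ->
  (r w <= r t)%R \/ (d w t < d s t)%N -> (potential w < potential t)%N -> False.
Proof.
case: Mt => M_tight ts Mst ws wt w_def sw w_cost w_pot.
have better M' : matched_away M' w -> False.
  by move/Mt_min; rewrite leqNgt w_pot.
have [z [zw Mzw]] : exists z, z != w /\ (0 < M z w)%N.
  by apply: (matching_in M_tight.1.1); rewrite M_tight.2 minnE; lia.
have z_sur := (tight_off_diag M_tight Mzw zw).1.
case: (eqVneq z s) => [zs|zs]; first by subst z; apply: (better M); split.
have zt : z != t by apply: contraTneq z_sur => ->; rewrite -leqNgt ltnW // t_deficit.
have st_zw : (s, t) != (z, w) by rewrite xpair_eqE negb_and eq_sym zs.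
have st : s != t by rewrite eq_sym.
have sw' : s != w by rewrite eq_sym.
apply: (better (exchange M s t z w)); split=> //.
  apply: tight_exchange => //.
  rewrite addnC; apply: leq_trans (exchange_cost_bound e_sym e_conn lr e_lr st zw _ w_cost).
    by rewrite leq_add2l; apply: dist_edge.
  exact: surplus_right.
have := exchangeE Mst Mzw st_zw s w.
by rewrite !xpair_eqE !eqxx (negbTE wt) eq_sym (negbTE zs) /= !addn0 addn1 => ->.
Qed.

Lemma adjacent_case : e s t -> Ds s = 1%N -> Dt t = 1%N -> Dt s = 0%N ->
  dominating_slide_along e Ds Dt M.
Proof.
have [M_tight ts Mst] := Mt; move=> st_edge Ds1 Dt1 Dts.
have st : s != t by rewrite eq_sym.
have dst : d s t = 1%N by apply/eqP; rewrite eqn_leq dist_edge // dist_gt0.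
have [Ds_slide|Ds_fail] := classic (dominating e (slide Ds s t)).
  left; exists s, t, t; do !split=> //.
  by apply: succ_intro; rewrite ?(distxx e_conn) ?dst.
have [Dt_slide|Dt_fail] := classic (dominating e (slide Dt t s)).
  right; exists s, t, s; do !split=> //.
  by apply: succ_intro; rewrite ?(distxx e_conn) // 1?e_sym // (distC e_sym e_conn) dst.
exfalso.
have [x [sx tx x_priv]] := private_of_not_dominating_slide Ds_dom Ds1 st Ds_fail.
have [y [ty _ y_priv]] := private_of_not_dominating_slide Dt_dom Dt1 ts Dt_fail.
have st_r := deficit_right t_deficit.
have /andP[_ lst] := edge_interval st_edge.
have /andP[_ lxs] : (l s <= r x)%R && (l x <= r s)%R by rewrite -dominates_interval.
have xt : (r x < l t)%R.
  by move: tx; rewrite dominates_interval negb_and -!ltNge => /orP[|txl] //; lra.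
have [w [ws w_def Dtw sw wx]] := deficit_dominator Dts (ltW (lt_le_trans xt lst)) x_priv.
have wt : w != t by apply: contraTneq wx => ->.
have wy := y_priv w wt Dtw.
have /andP[lty lyt] : (l t <= r y)%R && (l y <= r t)%R by rewrite -dominates_interval.
have /andP[lwx _] : (l w <= r x)%R && (l x <= r w)%R by rewrite -dominates_interval.
have wt_r : (r w < r t)%R.
  by move: wy; rewrite dominates_interval negb_and -!ltNge => /orP[ywl|wyl]; lra.
apply: (no_better_partner ws wt w_def sw (or_introl (ltW wt_r))).
rewrite /potential dst mul1n -addnS leq_add ?rank_lt //.
by rewrite -[leqRHS]mul1n leq_mul2r dist_edge ?orbT.
Qed.

Lemma nonadjacent_case : ~~ e s t -> Ds s = 1%N -> Dt s = 0%N ->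
  dominating_slide_along e Ds Dt M.
Proof.
have [M_tight ts Mst] := Mt; move=> nst Ds1 Dts.
have st : s != t by rewrite eq_sym.
have s_nt : ~~ dominates e s t by rewrite /dominates (negbTE st).
have st_r := deficit_right t_deficit.
have s_left_t : (r s < l t)%R.
  move: s_nt; rewrite dominates_interval negb_and -!ltNge => /orP[tls|//].
  by have := lr s => ?; lra.
have [z0 /succ_edge sz0] := succ_exists e_conn st.
have [g sg g_max] := @arg_maxP _ _ _ z0 (e s) r sz0.
have g_succ := rightmost_neighbor_succ e_sym e_conn lr e_lr s_left_t sg g_max.
have [Ds_slide|Ds_fail] := classic (dominating e (slide Ds s g)).
  by left; exists s, t, g.
exfalso.
have sg_neq : s != g by apply: contraTneq sg => <-; rewrite e_irr.
have [x [sx gx x_priv]] := private_of_not_dominating_slide Ds_dom Ds1 sg_neq Ds_fail.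
have sx_edge : e s x.
  move: sx; rewrite /dominates => /orP[/eqP xs|//]; move: gx.
  by rewrite /dominates -xs e_sym sg orbT.
have xg : (r x <= r g)%R := g_max x sx_edge.
have /andP[_ lgs] := edge_interval sg.
have xl : (r x < l g)%R.
  have := lr x; move: gx; rewrite dominates_interval negb_and -!ltNge.
  by case/orP=> [//|gxl] ?; lra.
have [w [ws w_def Dtw sw wx]] := deficit_dominator Dts (ltW (lt_le_trans xl lgs)) x_priv.
have wt : w != t by apply: contraNneq nst => <-.
have st2 := dist_gt1 e_conn s_nt.
apply: (no_better_partner ws wt w_def sw).
  case wt_dom: (dominates e w t).
    by right; apply: leq_ltn_trans (dist_dominates e_conn wt_dom) st2.
  left; have /andP[_ lws] := edge_interval sw; have := lr t => ?.
  move: wt_dom => /negbT; rewrite dominates_interval negb_and -!ltNge.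
  by case/orP=> [tlw|wtl]; lra.
rewrite /potential; apply: (@leq_trans (2 * #|T|)).
  rewrite mul2n -addnn -addnS leq_add ?rank_lt_card //.
  by rewrite -[leqRHS]mul1n leq_mul2r dist_edge ?orbT.
by rewrite (leq_trans _ (leq_addr _ _)) // leq_mul2r st2 orbT.
Qed.

End MinimalPair.

Hypothesis sz : msize Ds = msize Dt.

Lemma leftmost_surplus_slide :
  exists M, min_cost_matching e Ds Dt M /\ dominating_slide_along e Ds Dt M.
Proof.
have [M0 M0_tight] := tight_matching_exists e_conn sz.
have [t0 [t0s M0st0]] : exists t, t != s /\ (0 < M0 s t)%N.
  by apply: (matching_out M0_tight.1.1); rewrite M0_tight.2 minnE; lia.
case: (@ex_minimal (fun n => exists M t, matched_away M t /\ potential t = n)).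
  by exists (potential t0), M0, t0.
move=> _ [[M [t [Mt <-]]] n_min].
have Mt_min M' t' : matched_away M' t' -> (potential t <= potential t')%N.
  by move=> M't'; apply: n_min; exists M', t'.
have [M_tight ts Mst] := Mt; have t_def := t_deficit Mt.
exists M; split; first exact: M_tight.1.
have st : s != t by rewrite eq_sym.
have [Ds2|Ds1] := leqP 2 (Ds s).
  have [u' su'] := succ_exists e_conn st.
  by left; exists s, t, u'; split=> //; split=> //; apply: dominating_slide_surplus.
have [Dt2|Dt1] := leqP 2 (Dt t).
  have [v' tv'] := succ_exists e_conn ts.
  by right; exists s, t, v'; split=> //; split=> //; apply: dominating_slide_surplus.
have Ds_1 : Ds s = 1%N by move: s_surplus Ds1; clear; lia.
have Dt_1 : Dt t = 1%N by move: t_def Dt1; clear; lia.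
have Dt_0 : Dt s = 0%N by move: s_surplus Ds1; clear; lia.
case: (boolP (e s t)) => [st_edge|nst].
  exact: adjacent_case Mt Mt_min st_edge Ds_1 Dt_1 Dt_0.
exact: nonadjacent_case Mt Mt_min nst Ds_1 Dt_0.
Qed.

End LeftmostSurplus.

Theorem mainTheorem8 (T : finType) (e : rel T)
    (e_sym : symmetric e) (e_irr : irreflexive e)
    (e_int : interval_graph e) (e_conn : connected_graph e)
    (Ds Dt : mset T) :
  dominating e Ds -> dominating e Dt -> Ds <> Dt -> msize Ds = msize Dt ->
  exists M : T -> T -> nat,
    min_cost_matching e Ds Dt M /\
    ((exists u v u', (0 < M u v)%N /\ succ e u v u' /\ dominating e (slide Ds u u'))
     \/
     (exists u v v', (0 < M u v)%N /\ succ e v u v' /\ dominating e (slide Dt v v'))).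
Proof.
move=> Ds_dom Dt_dom Ds_neq sz; have [I [lr e_lr]] := e_int.
have [v0 v0_neq] : exists v, Ds v != Dt v.
  apply: NNPP => none; apply/Ds_neq/functional_extensionality => v.
  by apply/eqP/negbNE/negP => v_neq; apply: none; exists v.
have [s s_neq s_min] := @arg_minP _ _ _ v0 (fun v => Ds v != Dt v) (fun x => (I x).2) v0_neq.
case: (ltngtP (Dt s) (Ds s)) => [s_sur|s_def|s_eq]; last by rewrite s_eq eqxx in s_neq.
  have [M M_slide] :=
    leftmost_surplus_slide e_sym e_irr e_conn lr e_lr Ds_dom Dt_dom s_sur s_min sz.
  by exists M.
have s_min' v : Dt v != Ds v -> ((I s).2 <= (I v).2)%R by rewrite eq_sym => /s_min.
have [M [M_min M_slide]] :=
  leftmost_surplus_slide e_sym e_irr e_conn lr e_lr Dt_dom Ds_dom s_def s_min' (esym sz).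
exists (fun u v => M v u); split; first exact: min_cost_matching_transpose.
exact: dominating_slide_along_transpose.
Qed.
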